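(* Let $I$ be a bounded open interval containing $0$, let $f\in C^\infty(I)$ be real-valued, and suppose the series $\hat f$ converges uniformly on $I$ (its sum need not be constant). Let $F(x):=\int_0^x f(s)\,ds$ for $x\in I$. Then the series $\hat F$ converges uniformly on $I$ and $\hat F(x)=F(0)=0$ for all $x\in I$.
   Context: For a smooth function $h$ on an interval containing the point $t$, $\hat h(t)$ denotes the series $\hat h(t):=\sum_{n=0}^{\infty}\frac{(-1)^n}{n!}\,t^n h^{(n)}(t)$; convergence of $\hat h$ refers to convergence of its partial sums, and $\hat h(t)$ also denotes the sum. *)

From Stdlib Require Import Reals Lra Factorial.
Open Scope R_scope.

Definition in_I (a b x : R) : Prop := a < x < b.

(* The existence of such a family is exactly h in C^infty((a,b)). *)
Definition deriv_family (a b : R) (h : R -> R) (ds : nat -> R -> R) : Prop :=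
  (forall x, in_I a b x -> ds 0%nat x = h x) /\
  (forall (n : nat) x, in_I a b x -> derivable_pt_lim (ds n) x (ds (S n) x)).

(* N-th partial sum of  hat h (t) = sum_n (-1)^n / n! * t^n * h^(n)(t). *)
Definition hat_partial (ds : nat -> R -> R) (N : nat) (t : R) : R :=
  sum_f_R0 (fun n => (-1) ^ n / INR (fact n) * t ^ n * ds n t) N.

Definition unif_cv_on (a b : R) (u : nat -> R -> R) (g : R -> R) : Prop :=
  forall eps : R, 0 < eps -> exists N : nat, forall (n : nat) x,
    (N <= n)%nat -> in_I a b x -> Rabs (u n x - g x) < eps.

(** Write [T_n(h)(t) = (-1)^n / n! * t^n * h^(n)(t)] for the terms of [hat h].
    Since [F' = f], one has [(T_n(F))' = T_n(f) - T_(n-1)(f)], so the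
    derivative of the [N]-th partial sum of [hat F] telescopes to [T_N(f)].
    Uniform convergence of [hat f] makes these terms uniformly small on [I],
    and every partial sum of [hat F] takes the value [F(0) = 0] at [0], so by
    the mean value theorem the partial sums are at most [|x|] times as large,
    which is uniformly small because [I] is bounded. *)

From Stdlib Require Import Reals Lra Lia Factorial.
Open Scope R_scope.

Lemma in_I_nbhd a b x : in_I a b x ->
  exists d : posreal, forall y, Rabs (y - x) < d -> in_I a b y.
Proof.
  unfold in_I; intros Hx.
  assert (Hd : 0 < Rmin (x - a) (b - x)) by (apply Rmin_pos; lra).
  exists (mkposreal _ Hd); simpl; intros y Hy.
  apply Rabs_def2 in Hy.
  pose proof (Rmin_l (x - a) (b - x)); pose proof (Rmin_r (x - a) (b - x)); lra.
Qed.

Lemma derivable_pt_lim_eq_in_I a b g1 g2 x l : in_I a b x ->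
  (forall y, in_I a b y -> g1 y = g2 y) ->
  derivable_pt_lim g1 x l -> derivable_pt_lim g2 x l.
Proof.
  intros Hx Heq Hg eps Heps.
  destruct (in_I_nbhd a b x Hx) as [d Hd].
  destruct (Hg eps Heps) as [del Hdel].
  assert (Hp : 0 < Rmin del d) by (apply Rmin_pos; apply cond_pos).
  exists (mkposreal _ Hp); simpl; intros h Hh0 Hh.
  rewrite <- !Heq.
  - apply Hdel; [exact Hh0 | apply Rlt_le_trans with (1 := Hh), Rmin_l].
  - apply Hd; replace (x - x) with 0 by ring; rewrite Rabs_R0; apply cond_pos.
  - apply Hd; replace (x + h - x) with h by ring.
    apply Rlt_le_trans with (1 := Hh), Rmin_r.
Qed.

Lemma deriv_family_continuity_pt a b h ds : deriv_family a b h ds ->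
  forall x, in_I a b x -> continuity_pt h x.
Proof.
  intros [H0 HS] x Hx.
  apply derivable_continuous_pt; exists (ds 1%nat x).
  apply (derivable_pt_lim_eq_in_I a b (ds 0%nat)); auto.
Qed.

Lemma derivable_pt_lim_integral_from_0 a b f F : a < 0 < b ->
  (forall y, in_I a b y -> continuity_pt f y) ->
  (forall x (pr : Riemann_integrable f 0 x), in_I a b x -> F x = RiemannInt pr) ->
  forall x, in_I a b x -> derivable_pt_lim F x (f x).
Proof.
  unfold in_I; intros hab Hcont HF x Hx.
  set (c := (a + Rmin 0 x) / 2); set (d := (b + Rmax 0 x) / 2).
  pose proof (Rmin_l 0 x); pose proof (Rmin_r 0 x).
  pose proof (Rmax_l 0 x); pose proof (Rmax_r 0 x).
  assert (a < Rmin 0 x) by (apply Rmin_glb_lt; lra).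
  assert (Rmax 0 x < b) by (apply Rmax_lub_lt; lra).
  assert (hcd : c <= d) by (unfold c, d; lra).
  assert (Hc0 : c <= 0 <= d) by (unfold c, d; lra).
  assert (C0 : forall y, c <= y <= d -> continuity_pt f y).
  { intros y Hy; apply Hcont; unfold c, d in Hy; lra. }
  assert (integ : forall u v, c <= u <= d -> c <= v <= d -> Riemann_integrable f u v).
  { intros u v Hu Hv; destruct (Rle_dec u v).
    - apply continuity_implies_RiemannInt; [lra | intros; apply C0; lra].
    - apply RiemannInt_P1, continuity_implies_RiemannInt; [lra | intros; apply C0; lra]. }
  (* Near [x], [F] is the primitive of [f] from [c] shifted by the constant [K]. *)
  set (K := RiemannInt (integ c 0 (conj (Rle_refl c) hcd) Hc0)).
  apply (derivable_pt_lim_eq_in_I c d (fun y => primitive hcd (FTC_P1 hcd C0) y - K)).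
  - unfold in_I, c, d; lra.
  - intros y Hy; unfold in_I in Hy.
    assert (Hyc : c <= y <= d) by lra.
    rewrite (HF y (integ 0 y Hc0 Hyc)) by (unfold c, d in Hy; lra).
    unfold primitive.
    destruct (Rle_dec c y) as [Hcy |]; [| lra].
    destruct (Rle_dec y d) as [Hyd |]; [| lra].
    rewrite <- (RiemannInt_P26 (integ c 0 (conj (Rle_refl c) hcd) Hc0)
                  (integ 0 y Hc0 Hyc) (FTC_P1 hcd C0 Hcy Hyd)).
    unfold K; ring.
  - replace (f x) with (f x - 0) by ring.
    apply (derivable_pt_lim_minus _ (fct_cte K)).
    + apply RiemannInt_P28; unfold c, d; lra.
    + apply derivable_pt_lim_const.
Qed.

Definition cons_family (F : R -> R) (fs : nat -> R -> R) : nat -> R -> R :=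
  fun n => match n with O => F | S m => fs m end.

Lemma deriv_family_cons a b F f fs : deriv_family a b f fs ->
  (forall x, in_I a b x -> derivable_pt_lim F x (f x)) ->
  deriv_family a b F (cons_family F fs).
Proof.
  intros [Hf0 HfS] HF; split; [reflexivity |].
  intros [| n] x Hx; simpl.
  - rewrite Hf0 by exact Hx; auto.
  - auto.
Qed.

Definition hat_term (ds : nat -> R -> R) (n : nat) (t : R) : R :=
  (-1) ^ n / INR (fact n) * t ^ n * ds n t.

Lemma hat_partial_S ds N t :
  hat_partial ds (S N) t = hat_partial ds N t + hat_term ds (S N) t.
Proof. reflexivity. Qed.

Lemma hat_partial_at_0 ds N : hat_partial ds N 0 = ds 0%nat 0.
Proof.
  induction N as [| N IH].
  - unfold hat_partial; simpl; field.
  - rewrite hat_partial_S, IH; unfold hat_term; simpl; ring.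
Qed.

Lemma derivable_pt_lim_hat_term ds n x :
  derivable_pt_lim (ds n) x (ds (S n) x) ->
  derivable_pt_lim (hat_term ds n) x
    ((-1) ^ n / INR (fact n) * (INR n * x ^ pred n) * ds n x
     + (-1) ^ n / INR (fact n) * x ^ n * ds (S n) x).
Proof.
  intros Hd.
  apply (derivable_pt_lim_mult (mult_real_fct ((-1) ^ n / INR (fact n)) (fun t => t ^ n))).
  - apply derivable_pt_lim_scal, derivable_pt_lim_pow.
  - exact Hd.
Qed.

Lemma derivable_pt_lim_hat_partial ds N x :
  (forall n, derivable_pt_lim (ds n) x (ds (S n) x)) ->
  derivable_pt_lim (hat_partial ds N) x (hat_term (fun n => ds (S n)) N x).
Proof.
  intros Hd; induction N as [| N IH].
  - change (derivable_pt_lim (hat_term ds 0) x (hat_term (fun n => ds (S n)) 0 x)).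
    replace (hat_term (fun n => ds (S n)) 0 x) with
      ((-1) ^ 0 / INR (fact 0) * (INR 0 * x ^ pred 0) * ds 0%nat x
       + (-1) ^ 0 / INR (fact 0) * x ^ 0 * ds 1%nat x)
      by (unfold hat_term; simpl; field).
    apply derivable_pt_lim_hat_term, Hd.
  - change (derivable_pt_lim (fun t => hat_partial ds N t + hat_term ds (S N) t) x
              (hat_term (fun n => ds (S n)) (S N) x)).
    replace (hat_term (fun n => ds (S n)) (S N) x) with
      (hat_term (fun n => ds (S n)) N x
       + ((-1) ^ S N / INR (fact (S N)) * (INR (S N) * x ^ pred (S N)) * ds (S N) x
          + (-1) ^ S N / INR (fact (S N)) * x ^ S N * ds (S (S N)) x)).
    + apply derivable_pt_lim_plus; [exact IH | apply derivable_pt_lim_hat_term, Hd].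
    + unfold hat_term; simpl pred; rewrite fact_simpl, mult_INR.
      pose proof (INR_fact_neq_0 N).
      assert (INR (S N) <> 0) by (apply not_0_INR; discriminate).
      simpl pow; field; auto.
Qed.

Lemma unif_cv_on_succ_sub a b u g : unif_cv_on a b u g ->
  forall eps, 0 < eps -> exists N, forall n x, (N <= n)%nat -> in_I a b x ->
    Rabs (u (S n) x - u n x) < eps.
Proof.
  intros Hu eps Heps.
  destruct (Hu (eps / 2)) as [N HN]; [lra |].
  exists N; intros n x Hn Hx.
  replace (u (S n) x - u n x) with ((u (S n) x - g x) - (u n x - g x)) by ring.
  eapply Rle_lt_trans; [apply Rabs_triang |]; rewrite Rabs_Ropp.
  pose proof (HN (S n) x ltac:(lia) Hx); pose proof (HN n x Hn Hx); lra.
Qed.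

Lemma hat_term_unif_small a b ds :
  (exists g, unif_cv_on a b (hat_partial ds) g) ->
  forall eps, 0 < eps -> exists N, forall n x, (N <= n)%nat -> in_I a b x ->
    Rabs (hat_term ds n x) < eps.
Proof.
  intros [g Hg] eps Heps.
  destruct (unif_cv_on_succ_sub a b _ g Hg eps Heps) as [N HN].
  exists (S N); intros [| n] x Hn Hx; [lia |].
  replace (hat_term ds (S n) x) with (hat_partial ds (S n) x - hat_partial ds n x)
    by (rewrite hat_partial_S; ring).
  apply HN; [lia | exact Hx].
Qed.

Lemma Rabs_sub_le_of_deriv_bound_lt (phi phi' : R -> R) e u v : u < v ->
  (forall y, u <= y <= v -> derivable_pt_lim phi y (phi' y)) ->
  (forall y, u <= y <= v -> Rabs (phi' y) <= e) ->
  Rabs (phi v - phi u) <= e * Rabs (v - u).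
Proof.
  intros Huv Hd Hb.
  destruct (MVT_cor2 phi phi' u v Huv Hd) as [c [-> Hc]].
  rewrite Rabs_mult; apply Rmult_le_compat_r; [apply Rabs_pos |].
  apply Hb; lra.
Qed.

Lemma Rabs_sub_le_of_deriv_bound a b (phi phi' : R -> R) e :
  (forall y, in_I a b y -> derivable_pt_lim phi y (phi' y)) ->
  (forall y, in_I a b y -> Rabs (phi' y) <= e) ->
  forall x y, in_I a b x -> in_I a b y -> Rabs (phi x - phi y) <= e * Rabs (x - y).
Proof.
  unfold in_I; intros Hd Hb x y Hx Hy.
  destruct (Rtotal_order x y) as [Hlt | [-> | Hgt]].
  - rewrite Rabs_minus_sym, (Rabs_minus_sym x).
    apply (Rabs_sub_le_of_deriv_bound_lt phi phi'); auto; intros z Hz; [apply Hd | apply Hb]; lra.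
  - rewrite !Rminus_diag, Rabs_R0, Rmult_0_r; lra.
  - apply (Rabs_sub_le_of_deriv_bound_lt phi phi'); auto; intros z Hz; [apply Hd | apply Hb]; lra.
Qed.

Theorem theorem9 (a b : R) (hab : a < 0 < b)
  (f : R -> R) (fs : nat -> R -> R) (Hf : deriv_family a b f fs)
  (Hfhat : exists g : R -> R, unif_cv_on a b (hat_partial fs) g)
  (F : R -> R)
  (HF : forall x (pr : Riemann_integrable f 0 x), in_I a b x -> F x = RiemannInt pr) :
  F 0 = 0 /\
  exists Fs : nat -> R -> R,
    deriv_family a b F Fs /\
    unif_cv_on a b (hat_partial Fs) (fun _ => 0).
Proof.
  assert (HI0 : in_I a b 0) by (unfold in_I; lra).
  assert (HF0 : F 0 = 0) by (rewrite (HF 0 (RiemannInt_P7 f 0) HI0); apply RiemannInt_P9).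
  split; [exact HF0 |].
  pose proof (derivable_pt_lim_integral_from_0 a b f F hab
                (deriv_family_continuity_pt a b f fs Hf) HF) as HFd.
  pose proof (deriv_family_cons a b F f fs Hf HFd) as HFs.
  exists (cons_family F fs); split; [exact HFs |].
  intros eps Heps.
  set (M := Rmax (-a) b).
  assert (HM : 0 < M) by (apply Rlt_le_trans with b; [lra | apply Rmax_r]).
  destruct (hat_term_unif_small a b fs Hfhat (eps / (2 * M))) as [N HN].
  { apply Rdiv_lt_0_compat; lra. }
  exists N; intros n x Hn Hx.
  assert (Hbound := Rabs_sub_le_of_deriv_bound a b (hat_partial (cons_family F fs) n)
    (hat_term fs n) (eps / (2 * M))
    (fun y Hy => derivable_pt_lim_hat_partial _ n y (fun k => proj2 HFs k y Hy))
    (fun y Hy => Rlt_le _ _ (HN n y Hn Hy)) x 0 Hx HI0).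
  rewrite hat_partial_at_0 in Hbound; simpl in Hbound.
  rewrite HF0, !Rminus_0_r in Hbound; rewrite Rminus_0_r.
  assert (HxM : Rabs x < M).
  { unfold in_I in Hx; pose proof (Rmax_l (-a) b); pose proof (Rmax_r (-a) b).
    apply Rabs_def1; unfold M in *; lra. }
  assert (Hscale : eps / (2 * M) * Rabs x <= eps / (2 * M) * M).
  { apply Rmult_le_compat_l; [apply Rlt_le, Rdiv_lt_0_compat |]; lra. }
  replace (eps / (2 * M) * M) with (eps / 2) in Hscale by (field; lra).
  lra.
Qed.
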